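(* Consider the modified Ghaffari process described in the context, with marking decisions in each phase that are only pairwise independent. If phase $t$ is a type-1 golden phase for an undecided node $v$, i.e., $p_t(v)=1/4$ and $d_t(v)\le 1/2$, then $v$ joins the independent set in phase $t$ (i.e., $v$ is marked and none of its undecided neighbors is marked) with probability at least $1/8$.
   Context: Let $G=(V,E)$ be an undirected graph. The process runs in phases $t=0,1,2,\dots$ on the graph induced by the undecided nodes (initially all nodes); $N(v)$ denotes the set of undecided neighbors of $v$. Each undecided node $v$ has a value $p_t(v)$, with $p_0(v)=1/4$; its effective degree is $d_t(v)=\sum_{u\in N(v)}p_t(u)$. Then $p_{t+1}(v)=p_t(v)/2$ if $d_t(v)\ge 1/2$, and $p_{t+1}(v)=\min\{2p_t(v),1/4\}$ if $d_t(v)<1/2$. In phase $t$, each undecided node $v$ becomes marked with probability $p_t(v)$, where the marking events of the nodes in phase $t$ are pairwise independent (given the state at the start of the phase); a marked node none of whose undecided neighbors is marked joins the independent set, and it and all its neighbors are removed. *)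

From mathcomp Require Import all_boot all_order all_algebra.
Set Implicit Arguments. Unset Strict Implicit. Unset Printing Implicit Defensive.
Import Order.TTheory GRing.Theory Num.Theory.
Local Open Scope ring_scope.

Definition simple_graph (T : finType) (e : rel T) : Prop :=
  (forall x y, e x y = e y x) /\ (forall x, ~~ e x x).

Definition is_distr (R : numDomainType) (Omega : finType) (P : Omega -> R) : Prop :=
  (forall w, 0 <= P w) /\ \sum_(w : Omega) P w = 1.

Definition Pr (R : numDomainType) (Omega : finType) (P : Omega -> R)
  (A : pred Omega) : R := \sum_(w : Omega | A w) P w.

Definition eff_deg (R : numDomainType) (T : finType) (e : rel T) (U : {set T})
  (p : T -> R) (v : T) : R := \sum_(u in U | e v u) p u.

Definition pairwise_indep_marking (R : numDomainType) (T : finType) (U : {set T})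
  (p : T -> R) (Omega : finType) (P : Omega -> R) (mark : Omega -> T -> bool) : Prop :=
  (forall v, v \in U -> Pr P (fun w => mark w v) = p v) /\
  (forall u v, u \in U -> v \in U -> u != v ->
     Pr P (fun w => mark w u && mark w v) = p u * p v).

Definition joins (T : finType) (e : rel T) (U : {set T}) (Omega : finType)
  (mark : Omega -> T -> bool) (v : T) (w : Omega) : bool :=
  mark w v && [forall u, ((u \in U) && e v u) ==> ~~ mark w u].

(** Since [v] is marked with probability [1/4] and, by pairwise independence,
    each neighbour [u] is marked together with [v] with probability
    [p v * p u], a union bound over the neighbours shows that [v] is marked
    while no neighbour is with probability at least
    [p v - p v * d v = 1/4 * (1 - d v) >= 1/8]. *)
From mathcomp Require Import all_boot all_order all_algebra.
From mathcomp Require Import lra.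
Set Implicit Arguments. Unset Strict Implicit. Unset Printing Implicit Defensive.
Import Order.TTheory GRing.Theory Num.Theory.
Local Open Scope ring_scope.

Section UnionBound.

Variables (R : numDomainType) (Omega I : finType) (P : Omega -> R).
Hypothesis P_ge0 : forall w, 0 <= P w.

Lemma PrE (A : pred Omega) : Pr P A = \sum_w P w * (A w)%:R.
Proof.
rewrite /Pr big_mkcond /=; apply: eq_bigr => w _.
by case: (A w); rewrite ?mulr1 ?mulr0.
Qed.

Lemma indicator_union_bound (S : pred I) (B : I -> pred Omega) (A : pred Omega) w :
  (A w)%:R - \sum_(i | S i) ((A w && B i w)%:R : R)
    <= (A w && [forall i, S i ==> ~~ B i w])%:R.
Proof.
case: (A w) => /=; last by rewrite big1 ?subr0.
case: forallP => [_ | /forallP].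
  by rewrite lerBlDr lerDl sumr_ge0.
rewrite negb_forall => /existsP [i]; rewrite negb_imply negbK => /andP [Si Bi].
by rewrite subr_le0 (bigD1 i) //= Bi lerDl sumr_ge0.
Qed.

Lemma Pr_union_bound (S : pred I) (B : I -> pred Omega) (A : pred Omega) :
  Pr P A - \sum_(i | S i) Pr P (fun w => A w && B i w)
    <= Pr P (fun w => A w && [forall i, S i ==> ~~ B i w]).
Proof.
rewrite !PrE (eq_bigr _ (fun i _ => PrE _)) exchange_big /= -sumrB.
apply: ler_sum => w _; rewrite -mulr_sumr -mulrBr.
exact: ler_wpM2l (indicator_union_bound _ _ _ _).
Qed.

End UnionBound.

Lemma Pr_marked_with_neighbour (R : numDomainType) (T : finType) (e : rel T)
    (U : {set T}) (p : T -> R) (Omega : finType) (P : Omega -> R)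
    (mark : Omega -> T -> bool) (v : T) :
  (forall x, ~~ e x x) -> pairwise_indep_marking U p P mark -> v \in U ->
  \sum_(u in U | e v u) Pr P (fun w => mark w v && mark w u) = p v * eff_deg e U p v.
Proof.
move=> irr [_ indep] vU; rewrite /eff_deg mulr_sumr.
apply: eq_bigr => u /andP [uU evu]; apply: indep => //.
by apply: contraTneq evu => <-; exact: irr.
Qed.

Theorem lemma3 (R : realFieldType) (T : finType) (e : rel T) (U : {set T})
  (p : T -> R) (Omega : finType) (P : Omega -> R) (mark : Omega -> T -> bool)
  (v : T) :
  simple_graph e ->
  (forall u, u \in U -> 0 <= p u <= 1) ->
  is_distr P ->
  pairwise_indep_marking U p P mark ->
  v \in U ->
  p v = 1 / 4 ->
  eff_deg e U p v <= 1 / 2 ->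
  1 / 8 <= Pr P (joins e U mark v).
Proof.
move=> [_ irr] p01 [P_ge0 _] indep vU pv dv.
have deg_ge0 : 0 <= eff_deg e U p v.
  by apply: sumr_ge0 => u /andP [uU _]; case/andP: (p01 u uU).
have := Pr_union_bound P_ge0 (fun u => (u \in U) && e v u) (fun u w => mark w u)
  (fun w => mark w v).
rewrite (Pr_marked_with_neighbour irr indep vU) indep.1 // pv.
apply: le_trans; lra.
Qed.
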